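(* (i) If an entanglement witness $W$ on $\mathbb{C}^m\otimes\mathbb{C}^n$ can be locally projected to an entanglement witness supported on $\mathbb{C}^2\otimes\mathbb{C}^n$, then it can be further locally projected to an entanglement witness supported on $\mathbb{C}^2\otimes\mathbb{C}^2$. (ii) If $\rho_{AB}$ is a $1$-undistillable NPT state on $\mathbb{C}^m\otimes\mathbb{C}^n$, then $\rho_{AB}^\Gamma$ (which is an entanglement witness) cannot be locally projected to an entanglement witness supported on $\mathbb{C}^2\otimes\mathbb{C}^n$. (iii) If an entanglement witness can be locally projected to a non-decomposable entanglement witness that detects some PPT entangled state, then the original entanglement witness is itself non-decomposable.
   Context: An entanglement witness (EW) is a Hermitian matrix $W$ with $\mathrm{tr}(W\sigma)\ge0$ for all separable states $\sigma$ and $\mathrm{tr}(W\sigma)<0$ for some entangled state; it detects $\rho$ if $\mathrm{tr}(W\rho)<0$. A Hermitian matrix $W$ on $\mathbb{C}^m\otimes\mathbb{C}^n$ is locally projected to $W'=(U\otimes V)W(U\otimes V)^\dagger$ supported on $\mathbb{C}^p\otimes\mathbb{C}^q$ for matrices $U\in\mathcal{M}_{p,m}(\mathbb{C})$, $V\in\mathcal{M}_{q,n}(\mathbb{C})$. $M^\Gamma$ is the partial transpose with respect to the first subsystem; PPT/NPT means $\rho^\Gamma$ is / is not positive semidefinite. A state $\rho$ on $\mathbb{C}^m\otimes\mathbb{C}^n$ is $1$-undistillable if $(U\otimes V)\rho(U\otimes V)^\dagger$ is PPT for every $U\in\mathcal{M}_{2,m}(\mathbb{C})$ and every $V\in\mathcal{M}_{n}(\mathbb{C})$.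 A Hermitian $W$ is decomposable if $W=X^\Gamma+Y$ with $X,Y$ positive semidefinite. *)

From HB Require Import structures.
From mathcomp Require Import all_boot all_order all_algebra.
From mathcomp Require Import reals.
From mathcomp Require Import complex mxtens.
Set Implicit Arguments. Unset Strict Implicit. Unset Printing Implicit Defensive.
Import Order.TTheory GRing.Theory Num.Theory.
Local Open Scope ring_scope.

Section QInfo.
Variable R : realType.
Local Notation C := (complex R).

Definition adj (k l : nat) (A : 'M[C]_(k, l)) : 'M[C]_(l, k) :=
  (map_mx Num.conj A)^T.

Definition hermitian (k : nat) (A : 'M[C]_k) : Prop := adj A = A.

Definition psd (k : nat) (A : 'M[C]_k) : Prop :=
  hermitian A /\ forall v : 'cV[C]_k, 0 <= (adj v *m A *m v) 0 0.

Definition state (k : nat) (A : 'M[C]_k) : Prop := psd A /\ \tr A = 1.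

(* Kronecker product A (x) B with the standard index (i,j) |-> i*n + j *)
Definition kron (m1 n1 m2 n2 : nat) (A : 'M[C]_(m1, n1)) (B : 'M[C]_(m2, n2))
  : 'M[C]_(m1 * m2, n1 * n2) := tensmx A B.

Definition separable (m n : nat) (s : 'M[C]_(m * n)) : Prop :=
  exists (N : nat) (p : 'I_N -> C) (A : 'I_N -> 'M[C]_m) (B : 'I_N -> 'M[C]_n),
    (forall i, 0 <= p i /\ state (A i) /\ state (B i)) /\
    \sum_(i < N) p i = 1 /\
    s = \sum_(i < N) p i *: kron (A i) (B i).

(* partial transpose with respect to the first subsystem:
   (M^Gamma)_{(a,b),(c,d)} = M_{(c,b),(a,d)} *)
Definition ptrans (m n : nat) (M : 'M[C]_(m * n)) : 'M[C]_(m * n) :=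
  \matrix_(i, j)
    M (@mxtens_index m n ((mxtens_unindex j).1, (mxtens_unindex i).2))
      (@mxtens_index m n ((mxtens_unindex i).1, (mxtens_unindex j).2)).

Definition PPT (m n : nat) (r : 'M[C]_(m * n)) : Prop := psd (@ptrans m n r).
Definition NPT (m n : nat) (r : 'M[C]_(m * n)) : Prop := ~ @PPT m n r.

Definition EW (m n : nat) (W : 'M[C]_(m * n)) : Prop :=
  hermitian W /\
  (forall s : 'M[C]_(m * n), @separable m n s -> 0 <= \tr (W *m s)) /\
  (exists r : 'M[C]_(m * n), state r /\ ~ @separable m n r /\ \tr (W *m r) < 0).

Definition detects (k : nat) (W r : 'M[C]_k) : Prop := \tr (W *m r) < 0.

Definition lproj (p q m n : nat) (U : 'M[C]_(p, m)) (V : 'M[C]_(q, n))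
  (W : 'M[C]_(m * n)) : 'M[C]_(p * q) :=
  kron U V *m W *m adj (kron U V).

Definition undistillable1 (m n : nat) (r : 'M[C]_(m * n)) : Prop :=
  forall (U : 'M[C]_(2, m)) (V : 'M[C]_(n, n)), @PPT 2 n (lproj U V r).

Definition decomposable (m n : nat) (W : 'M[C]_(m * n)) : Prop :=
  exists X Y : 'M[C]_(m * n), psd X /\ psd Y /\ W = @ptrans m n X + Y.

End QInfo.
Arguments ptrans {R} m n M.
Arguments separable {R} m n s.
Arguments PPT {R} m n r.
Arguments NPT {R} m n r.
Arguments EW {R} m n W.
Arguments undistillable1 {R} m n r.
Arguments decomposable {R} m n W.

From Pilot Require Import Defs.
From HB Require Import structures.
From mathcomp Require Import all_boot all_order all_algebra.
From mathcomp Require Import reals.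
From mathcomp Require Import complex mxtens.
From mathcomp Require Import ring.
From mathcomp Require boolp spectral.
Import Order.TTheory GRing.Theory Num.Theory.
Local Open Scope ring_scope.

(** A Hermitian matrix is an entanglement witness exactly when it is block
    positive, i.e. <x (x) y| W |x (x) y> >= 0 for all product vectors, without
    being positive semidefinite; block positivity survives local projections.
    (i) A negative direction x of a witness on C^2 (x) C^n is the image
    (1 (x) Q^dagger) Phi of the unnormalised maximally entangled vector
    Phi = sum_a e_a (x) e_a of C^2 (x) C^2, so projecting further by 1 (x) Q
    keeps a negative direction.
    (ii) Local projection commutes with partial transposition up to conjugating
    U: (U (x) V) M^Gamma (U (x) V)^dagger = ((conj U (x) V) M (conj U (x) V)^dagger)^Gamma.
    For M = rho the right-hand side is positive semidefinite by
    1-undistillability, so it detects nothing; and rho^Gamma is block positive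
    because its product expectations are expectations of rho.
    (iii) The same identity sends X^Gamma + Y to a decomposable matrix, so local
    projections preserve decomposability. *)

Section Witnesses.
Set Implicit Arguments.
Unset Strict Implicit.
Variable R : realType.
Local Notation C := (complex R).

Lemma adjE k l (A : 'M[C]_(k, l)) i j : adj A i j = (A j i)^*.
Proof. by rewrite /adj !mxE. Qed.

Lemma adjK k l (A : 'M[C]_(k, l)) : adj (adj A) = A.
Proof. by apply/matrixP => i j; rewrite !adjE conjCK. Qed.

Lemma adjM k l p (A : 'M[C]_(k, l)) (B : 'M[C]_(l, p)) :
  adj (A *m B) = adj B *m adj A.
Proof.
apply/matrixP => i j; rewrite adjE !mxE rmorph_sum; apply: eq_bigr => h _.
by rewrite !adjE rmorphM mulrC.
Qed.

Lemma adjZ k l a (A : 'M[C]_(k, l)) : adj (a *: A) = a^* *: adj A.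
Proof. by apply/matrixP => i j; rewrite !adjE !mxE rmorphM. Qed.

Lemma adj1 k : adj (1%:M : 'M[C]_k) = 1%:M.
Proof. by apply/matrixP => i j; rewrite adjE !mxE conjC_nat eq_sym. Qed.

Lemma adj_delta k l (i : 'I_k) (j : 'I_l) :
  adj (delta_mx i j : 'M[C]_(k, l)) = delta_mx j i.
Proof. by apply/matrixP => a b; rewrite adjE !mxE conjC_nat andbC. Qed.

Lemma adj_kron m1 n1 m2 n2 (A : 'M[C]_(m1, n1)) (B : 'M[C]_(m2, n2)) :
  adj (kron A B) = kron (adj A) (adj B).
Proof. by rewrite /adj /kron map_mxT trmx_tens. Qed.

Lemma trmx_adj k l (A : 'M[C]_(k, l)) : (adj A)^T = map_mx Num.conj A.
Proof. exact: trmxK. Qed.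

Lemma adj_conj k l (A : 'M[C]_(k, l)) : adj (map_mx Num.conj A) = A^T.
Proof. by apply/matrixP => i j; rewrite adjE !mxE conjCK. Qed.

Definition qform k (M : 'M[C]_k) (v : 'cV[C]_k) : C := (adj v *m M *m v) 0 0.

Definition sqnorm k (v : 'cV[C]_k) : C := (adj v *m v) 0 0.

Lemma sqnorm_ge0 k (v : 'cV[C]_k) : 0 <= sqnorm v.
Proof.
rewrite /sqnorm mxE; apply: sumr_ge0 => i _.
by rewrite adjE mulrC mul_conjC_ge0.
Qed.

Lemma sqnorm_gt0 k (v : 'cV[C]_k) : v != 0 -> 0 < sqnorm v.
Proof.
move=> v0; rewrite lt_def sqnorm_ge0 andbT; apply: contraNneq v0.
rewrite /sqnorm mxE => /psumr_eq0P v_eq0; apply/eqP/matrixP => i j.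
rewrite (ord1 j) mxE; apply/eqP; rewrite -mul_conjC_eq0 mulrC -adjE.
by apply/eqP/v_eq0 => // l _; rewrite adjE mulrC mul_conjC_ge0.
Qed.

Lemma qform0 k (M : 'M[C]_k) : qform M 0 = 0.
Proof. by rewrite /qform mulmx0 mxE. Qed.

Lemma qformZ k a (M : 'M[C]_k) v : qform (a *: M) v = a * qform M v.
Proof. by rewrite /qform -scalemxAr -scalemxAl mxE. Qed.

Lemma qform_lproj k l (A : 'M[C]_(l, k)) (M : 'M[C]_k) v :
  qform (A *m M *m adj A) v = qform M (adj A *m v).
Proof. by rewrite /qform adjM adjK !mulmxA. Qed.

Lemma qform_rank1 k (x v : 'cV[C]_k) : qform (x *m adj x) v = sqnorm (adj x *m v).
Proof. by rewrite /qform /sqnorm adjM adjK !mulmxA. Qed.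

Lemma qform_real k (M : 'M[C]_k) v : Defs.hermitian M -> qform M v \is Num.real.
Proof.
move=> hM; rewrite CrealE; apply/eqP.
by rewrite /qform -adjE !adjM adjK hM mulmxA.
Qed.

Lemma tr_rank1 k (M : 'M[C]_k) x : \tr (M *m (x *m adj x)) = qform M x.
Proof. by rewrite mulmxA mxtrace_mulC trace_mx11 /qform mulmxA. Qed.

Lemma hermitian_lproj k l (A : 'M[C]_(l, k)) (M : 'M[C]_k) :
  Defs.hermitian M -> Defs.hermitian (A *m M *m adj A).
Proof. by move=> hM; rewrite /Defs.hermitian !adjM adjK hM mulmxA. Qed.

Lemma psd_lproj k l (A : 'M[C]_(l, k)) (M : 'M[C]_k) :
  psd M -> psd (A *m M *m adj A).
Proof.
move=> [hM qM]; split=> [|v]; first exact: hermitian_lproj.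
by rewrite -/(qform _ v) qform_lproj; exact: qM.
Qed.

Lemma psd_diag_ge0 k (M : 'M[C]_k) i : psd M -> 0 <= M i i.
Proof.
by move=> [_ /(_ (delta_mx i 0))]; rewrite adj_delta -rowE -colE !mxE.
Qed.

Lemma psdZ k a (M : 'M[C]_k) : 0 <= a -> psd M -> psd (a *: M).
Proof.
move=> a0 [hM qM]; split=> [|v]; first by rewrite /Defs.hermitian adjZ hM geC0_conj.
by rewrite -/(qform _ v) qformZ mulr_ge0 //; exact: qM.
Qed.

Lemma psd_rank1 k (x : 'cV[C]_k) : psd (x *m adj x).
Proof.
split=> [|v]; first by rewrite /Defs.hermitian adjM adjK.
by rewrite -/(qform _ v) qform_rank1 sqnorm_ge0.
Qed.

Lemma not_psd_qform_lt0 k (M : 'M[C]_k) :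
  Defs.hermitian M -> ~ psd M -> exists x, qform M x < 0.
Proof.
move=> hM npM; have /boolp.existsNP [x qx] : ~ forall x, 0 <= qform M x.
  by move=> qM; apply: npM.
by exists x; rewrite real_ltNge ?qform_real ?real0 //; apply/negP.
Qed.

Lemma psd_rank1_decomp k (A : 'M[C]_k) : psd A ->
  exists (d : 'I_k -> C) (u : 'I_k -> 'cV[C]_k),
    (forall i, 0 <= d i) /\ A = \sum_i d i *: (u i *m adj (u i)).
Proof.
move=> pA; have [hA _] := pA.
have adjT (B : 'M[C]_k) : map_mx Num.conj B^T = adj B by rewrite /adj map_trmx.
have nA : A \is spectral.normalmx by apply/spectral.normalmxP; rewrite adjT hA.
set P := spectral.spectralmx A; set D := spectral.spectral_diag A.
have eA : A = adj P *m diag_mx D *m P.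
  rewrite -adjT -spectral.invmx_unitary ?spectral.spectral_unitarymx //.
  exact/spectral.orthomx_spectralP.
have PP : P *m adj P = 1%:M.
  by rewrite -adjT; apply/spectral.unitarymxP; exact: spectral.spectral_unitarymx.
have D0 i : 0 <= D 0 i.
  have := psd_diag_ge0 i (psd_lproj P pA).
  by rewrite eA !mulmxA PP mul1mx -mulmxA PP mulmx1 mxE eqxx mulr1n.
exists (fun i => D 0 i), (fun i => adj (delta_mx 0 i *m P)); split=> //.
rewrite {1}eA diag_mx_sum_delta mulmx_sumr mulmx_suml; apply: eq_bigr => i _.
rewrite adjK adjM adj_delta -scalemxAr -scalemxAl; congr (_ *: _).
by rewrite !mulmxA -[adj P *m _ *m _]mulmxA mul_delta_mx.
Qed.

Lemma psd_tr_ge0 k (M r : 'M[C]_k) : psd M -> psd r -> 0 <= \tr (M *m r).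
Proof.
move=> [_ qM] /psd_rank1_decomp [d [u [d0 ->]]].
rewrite mulmx_sumr raddf_sum /=; apply: sumr_ge0 => i _.
by rewrite -scalemxAr mxtraceZ tr_rank1 mulr_ge0 //; exact: qM.
Qed.

Lemma kron_suml (I : finType) m1 n1 m2 n2 (F : I -> 'M[C]_(m1, n1)) (B : 'M[C]_(m2, n2)) :
  kron (\sum_i F i) B = \sum_i kron (F i) B.
Proof.
apply/matrixP => i j; rewrite !mxE !summxE mulr_suml.
by apply: eq_bigr => h _; rewrite !mxE.
Qed.

Lemma kron_sumr (I : finType) m1 n1 m2 n2 (A : 'M[C]_(m1, n1)) (F : I -> 'M[C]_(m2, n2)) :
  kron A (\sum_i F i) = \sum_i kron A (F i).
Proof.
apply/matrixP => i j; rewrite !mxE !summxE mulr_sumr.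
by apply: eq_bigr => h _; rewrite !mxE.
Qed.

Lemma kron_scalel m1 n1 m2 n2 a (A : 'M[C]_(m1, n1)) (B : 'M[C]_(m2, n2)) :
  kron (a *: A) B = a *: kron A B.
Proof. by apply/matrixP => i j; rewrite !mxE mulrA. Qed.

Lemma kron_scaler m1 n1 m2 n2 a (A : 'M[C]_(m1, n1)) (B : 'M[C]_(m2, n2)) :
  kron A (a *: B) = a *: kron A B.
Proof. by apply/matrixP => i j; rewrite !mxE mulrCA. Qed.

Lemma kron_mulmx m n p q r s (A : 'M[C]_(m, n)) (B : 'M[C]_(p, q))
    (A' : 'M[C]_(n, r)) (B' : 'M[C]_(q, s)) :
  kron A B *m kron A' B' = kron (A *m A') (B *m B').
Proof. exact: tensmx_mul. Qed.

Lemma kron_rank1 m n (x : 'cV[C]_m) (y : 'cV[C]_n) :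
  kron (x *m adj x) (y *m adj y) = kron x y *m adj (kron x y).
Proof. by rewrite adj_kron kron_mulmx. Qed.

Definition block_positive m n (M : 'M[C]_(m * n)) : Prop :=
  forall (x : 'cV[C]_m) (y : 'cV[C]_n), 0 <= qform M (kron x y).

Lemma block_positive_tr_kron m n (M : 'M[C]_(m * n)) A B :
  block_positive M -> psd A -> psd B -> 0 <= \tr (M *m kron A B).
Proof.
move=> bM /psd_rank1_decomp [a [u [a0 ->]]] /psd_rank1_decomp [b [w [b0 ->]]].
rewrite kron_suml mulmx_sumr raddf_sum /=; apply: sumr_ge0 => i _.
rewrite kron_scalel kron_sumr -scalemxAr mxtraceZ mulr_ge0 //.
rewrite mulmx_sumr raddf_sum /=; apply: sumr_ge0 => j _.
by rewrite kron_scaler -scalemxAr mxtraceZ kron_rank1 tr_rank1 mulr_ge0.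
Qed.

Lemma block_positive_separable m n (M s : 'M[C]_(m * n)) :
  block_positive M -> separable m n s -> 0 <= \tr (M *m s).
Proof.
move=> bM [N [p [A [B [hpAB [_ ->]]]]]].
rewrite mulmx_sumr raddf_sum /=; apply: sumr_ge0 => i _.
have [p0 [[pA _] [pB _]]] := hpAB i.
by rewrite -scalemxAr mxtraceZ mulr_ge0 // block_positive_tr_kron.
Qed.

Lemma block_positive_lproj m n p q (U : 'M[C]_(p, m)) (V : 'M[C]_(q, n)) M :
  block_positive M -> block_positive (lproj U V M).
Proof.
by move=> bM x y; rewrite /lproj qform_lproj adj_kron (kron_mulmx (adj U) (adj V) x y).
Qed.

Definition pure_state k (x : 'cV[C]_k) : 'M[C]_k := (sqnorm x)^-1 *: (x *m adj x).

Lemma pure_state_state k (x : 'cV[C]_k) : x != 0 -> state (pure_state x).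
Proof.
move=> x0; have nx := sqnorm_gt0 x0.
split; first by apply: psdZ (psd_rank1 x); rewrite invr_ge0 ltW.
by rewrite mxtraceZ mxtrace_mulC trace_mx11 mulVf ?gt_eqF.
Qed.

Lemma tr_pure_state k (M : 'M[C]_k) x :
  \tr (M *m pure_state x) = (sqnorm x)^-1 * qform M x.
Proof. by rewrite -scalemxAr mxtraceZ tr_rank1. Qed.

Lemma separable_kron m n (A : 'M[C]_m) (B : 'M[C]_n) :
  state A -> state B -> separable m n (kron A B).
Proof.
move=> sA sB; exists 1%N, (fun=> 1), (fun=> A), (fun=> B).
by rewrite !big_ord1 scale1r; split=> // _; split=> //; exact: ler01.
Qed.

Lemma EW_block_positive m n (W : 'M[C]_(m * n)) : EW m n W -> block_positive W.
Proof.
move=> [_ [sepW _]] x y.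
have [->|x0] := eqVneq x 0; first by rewrite /kron tens0mx qform0.
have [->|y0] := eqVneq y 0; first by rewrite /kron tensmx0 qform0.
have := sepW _ (separable_kron (pure_state_state x0) (pure_state_state y0)).
rewrite kron_scalel kron_scaler scalerA kron_rank1 -scalemxAr mxtraceZ tr_rank1.
by rewrite pmulr_rge0 // mulr_gt0 // invr_gt0 sqnorm_gt0.
Qed.

Lemma block_positive_EW m n (W : 'M[C]_(m * n)) x :
  Defs.hermitian W -> block_positive W -> qform W x < 0 -> EW m n W.
Proof.
move=> hW bW ltx; have x0 : x != 0 by apply: contraTneq ltx => ->; rewrite qform0 ltxx.
have trx : \tr (W *m pure_state x) < 0.
  by rewrite tr_pure_state pmulr_rlt0 // invr_gt0 sqnorm_gt0.
split=> //; split=> [s|]; first exact: block_positive_separable.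
exists (pure_state x); split; first exact: pure_state_state.
by split=> // /(block_positive_separable bW); rewrite lt_geF.
Qed.

Lemma EWP m n (W : 'M[C]_(m * n)) :
  EW m n W <-> [/\ Defs.hermitian W, block_positive W & exists x, qform W x < 0].
Proof.
split=> [EWW | [hW bW [x ltx]]]; last exact: block_positive_EW ltx.
have [hW [_ [r [[pr _] [_ ltr]]]]] := EWW.
split=> //; first exact: EW_block_positive.
by apply: not_psd_qform_lt0 => // pW; move: (psd_tr_ge0 pW pr); rewrite lt_geF.
Qed.

Lemma kronE m1 n1 m2 n2 (A : 'M[C]_(m1, n1)) (B : 'M[C]_(m2, n2)) a b c d :
  kron A B (mxtens_index (a, b)) (mxtens_index (c, d)) = A a c * B b d.
Proof. exact: tensmxE. Qed.

Lemma ptransE m n (M : 'M[C]_(m * n)) a b c d :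
  ptrans m n M (mxtens_index (a, b)) (mxtens_index (c, d)) =
  M (mxtens_index (c, b)) (mxtens_index (a, d)).
Proof. by rewrite /ptrans mxE !mxtens_indexK. Qed.

Lemma ptrans_adj m n (M : 'M[C]_(m * n)) : adj (ptrans m n M) = ptrans m n (adj M).
Proof.
apply/matrixP => i j.
case: (mxtens_indexP i) => a b; case: (mxtens_indexP j) => c d.
by rewrite adjE !ptransE adjE.
Qed.

Lemma hermitian_ptrans m n (M : 'M[C]_(m * n)) :
  Defs.hermitian M -> Defs.hermitian (ptrans m n M).
Proof. by move=> hM; rewrite /Defs.hermitian ptrans_adj hM. Qed.

Lemma big_mxtens p q (F : 'I_(p * q) -> C) :
  \sum_(k < p * q) F k = \sum_(a < p) \sum_(b < q) F (mxtens_index (a, b)).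
Proof.
rewrite pair_big /=; apply: reindex; exists (@mxtens_unindex p q) => k _.
  by rewrite -surjective_pairing mxtens_indexK.
by rewrite -surjective_pairing mxtens_unindexK.
Qed.

Lemma mulmx3E k l r s (A : 'M[C]_(k, l)) (B : 'M[C]_(l, r)) (D : 'M[C]_(r, s)) i j :
  (A *m B *m D) i j = \sum_(x < l) \sum_(y < r) A i x * B x y * D y j.
Proof.
rewrite mxE exchange_big /=; apply: eq_bigr => y _.
by rewrite mxE mulr_suml.
Qed.

Lemma ptrans_mul_kron m n p q (A : 'M[C]_(p, m)) (B : 'M[C]_(q, n))
    (A' : 'M[C]_(m, p)) (B' : 'M[C]_(n, q)) (M : 'M[C]_(m * n)) :
  kron A B *m ptrans m n M *m kron A' B' =
  ptrans p q (kron A'^T B *m M *m kron A^T B').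
Proof.
apply/matrixP => i j.
case: (mxtens_indexP i) => a b; case: (mxtens_indexP j) => c d.
rewrite ptransE !mulmx3E !big_mxtens.
under eq_bigr do under eq_bigr do rewrite big_mxtens.
under [RHS]eq_bigr do under eq_bigr do rewrite big_mxtens.
(* The summands agree once the two first-factor indices trade places. *)
rewrite exchange_big; under eq_bigr do rewrite exchange_big.
rewrite exchange_big; apply: eq_bigr => y1 _; apply: eq_bigr => x2 _.
apply: eq_bigr => x1 _; apply: eq_bigr => y2 _.
by rewrite !kronE ptransE !mxE; ring.
Qed.

Lemma lproj_ptrans m n p q (U : 'M[C]_(p, m)) (V : 'M[C]_(q, n)) (M : 'M[C]_(m * n)) :
  lproj U V (ptrans m n M) = ptrans p q (lproj (map_mx Num.conj U) V M).
Proof. by rewrite /lproj adj_kron ptrans_mul_kron trmx_adj -adj_conj adj_kron. Qed.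

Lemma ptrans11 (N : 'M[C]_(1 * 1)) : ptrans 1 1 N = N.
Proof.
have idx0 (k : 'I_(1 * 1)) : k = mxtens_index (0, 0) by apply: val_inj; case: k => [[]].
by apply/matrixP => i j; rewrite (idx0 i) (idx0 j) ptransE.
Qed.

Lemma block_positive_ptrans m n (r : 'M[C]_(m * n)) :
  psd r -> block_positive (ptrans m n r).
Proof.
move=> pr x y.
have lproj_qform N : qform N (kron x y) = lproj (adj x) (adj y) N 0 0.
  by rewrite /lproj /qform adj_kron !adjK -adj_kron.
by rewrite lproj_qform lproj_ptrans ptrans11; apply/psd_diag_ge0/psd_lproj.
Qed.

Definition max_ent k : 'cV[C]_(k * k) :=
  \col_i ((mxtens_unindex i).1 == (mxtens_unindex i).2)%:R.

Lemma max_ent_lift k n (x : 'cV[C]_(k * n)) :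
  exists Q : 'M[C]_(k, n), adj (kron 1%:M Q) *m max_ent k = x.
Proof.
exists (adj (\matrix_(b, a) x (mxtens_index (a, b)) 0)).
rewrite adj_kron adj1 adjK; apply/matrixP => i j; rewrite (ord1 j).
case: (mxtens_indexP i) => a b; rewrite mxE big_mxtens (bigD1 a) //=.
rewrite [X in _ + X]big1 ?addr0 => [|a' a'a]; last first.
  apply: big1 => c _; rewrite kronE !mxE mxtens_indexK /=.
  by rewrite eq_sym (negbTE a'a) !mul0r.
rewrite (bigD1 a) //= big1 ?addr0 => [|c ca].
  by rewrite kronE !mxE mxtens_indexK /= !eqxx mul1r mulr1.
by rewrite kronE !mxE mxtens_indexK /= eq_sym (negbTE ca) mulr0.
Qed.

Lemma lprojD m n p q (U : 'M[C]_(p, m)) (V : 'M[C]_(q, n)) (A B : 'M[C]_(m * n)) :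
  lproj U V (A + B) = lproj U V A + lproj U V B.
Proof. by rewrite /lproj mulmxDr mulmxDl. Qed.

Lemma decomposable_lproj m n p q (U : 'M[C]_(p, m)) (V : 'M[C]_(q, n)) W :
  decomposable m n W -> decomposable p q (lproj U V W).
Proof.
move=> [X [Y [pX [pY ->]]]].
exists (lproj (map_mx Num.conj U) V X), (lproj U V Y).
rewrite lprojD lproj_ptrans.
by split; last split; [apply: psd_lproj | apply: psd_lproj |].
Qed.

End Witnesses.

Theorem lemma9 (R : realType) :
  (* (i) *)
  (forall (m n : nat) (W : 'M[complex R]_(m * n)),
     EW m n W ->
     forall (U : 'M[complex R]_(2, m)) (V : 'M[complex R]_(n, n)),
       EW 2 n (lproj U V W) ->
       exists (P : 'M[complex R]_(2, 2)) (Q : 'M[complex R]_(2, n)),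
         EW 2 2 (lproj P Q (lproj U V W))) /\
  (* (ii) *)
  (forall (m n : nat) (r : 'M[complex R]_(m * n)),
     state r -> NPT m n r -> undistillable1 m n r ->
     EW m n (ptrans m n r) /\
     forall (U : 'M[complex R]_(2, m)) (V : 'M[complex R]_(n, n)),
       ~ EW 2 n (lproj U V (ptrans m n r))) /\
  (* (iii) *)
  (forall (m n : nat) (W : 'M[complex R]_(m * n)),
     EW m n W ->
     forall (p q : nat) (U : 'M[complex R]_(p, m)) (V : 'M[complex R]_(q, n)),
       EW p q (lproj U V W) ->
       ~ decomposable p q (lproj U V W) ->
       (exists r : 'M[complex R]_(p * q),
          state r /\ PPT p q r /\ ~ separable p q r /\ detects (lproj U V W) r) ->
       ~ decomposable m n W).
Proof.
split; [|split].
- move=> m n W _ U V /EWP [hW bW [x ltx]].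
  have [Q eQ] := max_ent_lift x.
  exists 1%:M, Q; apply/EWP; split.
  + exact: hermitian_lproj.
  + exact: block_positive_lproj.
  + by exists (max_ent R 2); rewrite /lproj qform_lproj eQ.
- move=> m n r [pr _] nr ur; have hr := hermitian_ptrans pr.1; split.
  + apply/EWP; split=> //; first exact: block_positive_ptrans.
    exact: not_psd_qform_lt0.
  + move=> U V /EWP [_ _ [x]]; rewrite lproj_ptrans.
    by have [_ /(_ x) /le_gtF ->] := ur (map_mx Num.conj U) V.
- move=> m n W _ p q U V _ ndW _ dW.
  exact/ndW/decomposable_lproj.
Qed.
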